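(* For $k=1,2$ let $p_k,q_k\ge0$ be integers, $l_k=p_k+q_k$, $f_k\in\mathfrak H^{\odot p_k}\otimes\mathfrak H^{\odot q_k}$, and let $h_k$ be the reverse complex conjugate of $f_k$. Then for $0\le i\le p_1\wedge q_2$ and $0\le j\le q_1\wedge p_2$, $$\|f_1\tilde\otimes_{i,j}f_2\|_{\mathfrak H^{\otimes(l_1+l_2-2(i+j))}}\le\|f_1\otimes_{i,j}f_2\|_{\mathfrak H^{\otimes(l_1+l_2-2(i+j))}}\le\|f_1\|_{\mathfrak H^{\otimes l_1}}\|f_2\|_{\mathfrak H^{\otimes l_2}},$$ and $$\|f_1\otimes_{i,j}f_2\|^2_{\mathfrak H^{\otimes(l_1+l_2-2(i+j))}}\le\frac12\|f_1\otimes_{p_1-i,q_1-j}h_1\|^2_{\mathfrak H^{\otimes 2(i+j)}}+\frac12\|f_2\otimes_{p_2-j,q_2-i}h_2\|^2_{\mathfrak H^{\otimes 2(i+j)}}.$$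
   Context: Let $\mathfrak H$ be a complex separable Hilbert space with orthonormal basis $\{e_k\}_{k\ge1}$, and let $Z=\{Z(h):h\in\mathfrak H\}$ be a complex isonormal Gaussian process: a centered symmetric complex Gaussian family with $\mathbb E[Z(h)^2]=0$ and $\mathbb E[Z(g)\overline{Z(h)}]=\langle g,h\rangle_{\mathfrak H}$. The complex Hermite polynomials $H_{p,q}$ are defined by $\exp\{\lambda\bar z+\bar\lambda z-2|\lambda|^2\}=\sum_{p,q\ge0}\frac{\bar\lambda^p\lambda^q}{p!q!}H_{p,q}(z)$. The complex multiple Wiener–Itô integral $I_{p,q}$ on $\mathfrak H^{\odot p}\otimes\mathfrak H^{\odot q}$ is determined by $I_{p,q}\big((\tilde\otimes_k e_k^{\otimes p_k})\otimes(\tilde\otimes_k\overline{e_k}^{\otimes q_k})\big)=\prod_k 2^{-(p_k+q_k)/2}H_{p_k,q_k}(\sqrt2 Z(e_k))$ ($\sum p_k=p,\sum q_k=q$), extended linearly and continuously. The reverse complex conjugate of $f\in\mathfrak H^{\odot p}\otimes\mathfrak H^{\odot q}$ is the $h\in\mathfrak H^{\odot q}\otimes\mathfrak H^{\odot p}$ with $\overline{I_{p,q}(f)}=I_{q,p}(h)$ (for $\mathfrak H=L^2_{\mathbb C}(T,\mu)$: $h(t_1..t_q;s_1..s_p)=\overline{f(s_1..s_p;t_1..t_q)}$). For $f\in\mathfrak H^{\odot a}\otimes\mathfrak H^{\odot b}$, $g\in\mathfrak H^{\odot c}\otimes\mathfrak H^{\odot d}$, $0\le i\le a\wedge d$, $0\le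 j\le b\wedge c$, the contraction is $f\otimes_{i,j}g=\sum_{l_1,\dots,l_{i+j}}\langle f,e_{l_1}\otimes\cdots\otimes e_{l_i}\otimes\overline{e_{l_{i+1}}}\otimes\cdots\otimes\overline{e_{l_{i+j}}}\rangle\otimes\langle g,e_{l_{i+1}}\otimes\cdots\otimes e_{l_{i+j}}\otimes\overline{e_{l_1}}\otimes\cdots\otimes\overline{e_{l_i}}\rangle\in\mathfrak H^{\otimes(a+c-i-j)}\otimes\mathfrak H^{\otimes(b+d-i-j)}$; for $\mathfrak H=L^2_{\mathbb C}$, $f\otimes_{i,j}g(t_1..t_{a+c-i-j};s_1..s_{b+d-i-j})=\int f(t_1..t_{a-i},u_1..u_i;s_1..s_{b-j},v_1..v_j)\,g(t_{a-i+1}..t_{a+c-i-j},v_1..v_j;s_{b-j+1}..s_{b+d-i-j},u_1..u_i)\,d\vec u\,d\vec v$. $f\otimes_{0,0}g=f\otimes g$. $f\tilde\otimes_{i,j}g$ denotes the symmetrization of $f\otimes_{i,j}g$ (separately in its first $a+c-i-j$ and last $b+d-i-j$ arguments). *)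

From HB Require Import structures.
From mathcomp Require Import all_boot all_order all_algebra all_fingroup.
From mathcomp Require Import all_classical all_reals all_analysis.
From mathcomp Require Import complex.
Set Implicit Arguments. Unset Strict Implicit. Unset Printing Implicit Defensive.
Import Order.TTheory GRing.Theory Num.Theory.
Local Open Scope classical_set_scope.
Local Open Scope ring_scope.

(* Model: H = L^2_C(I, counting measure) = l^2(I) for a countable index set I
   (any complex separable Hilbert space is of this form, {e_k} = indicators).
   An element of H^{(x)p} (x) H^{(x)q} is represented by its kernel
   f(t_1..t_p ; s_1..s_q), encoded as a function seq I -> seq I -> R[i]
   whose values are only relevant on lists of sizes p and q. *)

Section Tensors.
Variables (R : realType) (I : countType).

Definition tensor := seq I -> seq I -> R[i].

Definition sqmod (z : R[i]) : R := complex.Re z ^+ 2 + complex.Im z ^+ 2.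

Definition cconj (z : R[i]) : R[i] := (complex.Re z -i* complex.Im z)%C.

Definition arity (p q : nat) : set (seq I * seq I) :=
  [set x | size x.1 = p /\ size x.2 = q].

Definition hnorm2 (p q : nat) (f : tensor) : \bar R :=
  \esum_(x in arity p q) (sqmod (f x.1 x.2))%:E.

Definition hnorm (p q : nat) (f : tensor) : R := Num.sqrt (fine (hnorm2 p q f)).

Definition in_sym_space (p q : nat) (f : tensor) : Prop :=
  (hnorm2 p q f < +oo)%E /\
  (forall t t' s s', size t = p -> size s = q ->
     perm_eq t t' -> perm_eq s s' -> f t s = f t' s').

Definition rconj (f : tensor) : tensor := fun t s => cconj (f s t).

Definition rsum (T : choiceType) (D : set T) (g : T -> R) : R :=
  fine (\esum_(x in D) (Num.max (g x) 0)%:E)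
  - fine (\esum_(x in D) (Num.max (- g x) 0)%:E).

Definition csum (T : choiceType) (D : set T) (F : T -> R[i]) : R[i] :=
  (rsum D (fun x => complex.Re (F x)) +i* rsum D (fun x => complex.Im (F x)))%C.

(* contr f (x)_{i,j} g for f with arity (a,b):
   (f (x)_{i,j} g)(t ; s) = sum_{u in I^i, v in I^j}
      f(t_1..t_{a-i}, u ; s_1..s_{b-j}, v) g(t_{a-i+1}.., v ; s_{b-j+1}.., u) *)
Definition contr (a b i j : nat) (f g : tensor) : tensor :=
  fun t s => csum (arity i j) (fun uv =>
    f (take (a - i) t ++ uv.1) (take (b - j) s ++ uv.2) *
    g (drop (a - i) t ++ uv.2) (drop (b - j) s ++ uv.1)).

Definition pseq (n : nat) (sigma : 'S_n) (t : seq I) : seq I :=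
  match t with
  | [::] => [::]
  | x :: _ => [seq nth x t (sigma k) | k <- enum 'I_n]
  end.

Definition symz (n m : nat) (F : tensor) : tensor :=
  fun t s => ((n`!)%:R * (m`!)%:R)^-1 *
    \sum_(sigma : 'S_n) \sum_(tau : 'S_m) F (pseq sigma t) (pseq tau s).

End Tensors.

(* Write w = (u, v) for the i + j contracted arguments. Then f1 (x)_{i,j} f2 is the
   matrix product C(x, y) = sum_w F(x, w) G(w, y) of kernels F, G obtained from f1, f2
   by splitting off the contracted arguments, and ||F|| = ||f1||, ||G|| = ||f2||.
   Cauchy-Schwarz in w gives ||C|| <= ||F|| ||G||. Expanding |C(x, y)|^2 and summing
   over x and y gives ||C||^2 = Re sum_{w,w'} A(w, w') B(w, w') for the Gram matrices
   A(w, w') = sum_x F(x, w) conj F(x, w') and B(w, w') = sum_y G(w, y) conj G(w', y),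
   so 2 Re(ab) <= |a|^2 + |b|^2 yields ||C||^2 <= ||A||^2 / 2 + ||B||^2 / 2; by the
   symmetry of f_k, A and B are reindexings of the contractions of f_k with h_k.
   Symmetrization averages n! m! rearrangements of C, each of norm ||C||, so by
   convexity of |.|^2 it does not increase the norm. Infinite sums are reduced to
   finite ones by truncating along exhaustions of the countable index sets and
   passing to the limit. *)

From HB Require Import structures.
From mathcomp Require Import all_boot all_order all_algebra all_fingroup.
From mathcomp Require Import all_classical all_reals all_analysis.
From mathcomp Require Import complex.
From mathcomp Require Import ring lra zify.
Set Implicit Arguments. Unset Strict Implicit. Unset Printing Implicit Defensive.
Import Order.TTheory GRing.Theory Num.Theory numFieldNormedType.Exports.
Local Open Scope classical_set_scope.
Local Open Scope ring_scope.

Section ComplexFacts.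
Context {R : realType}.
Implicit Types x y z : R[i].

Lemma sqmod_ge0 z : 0 <= sqmod z.
Proof. by rewrite /sqmod addr_ge0 ?sqr_ge0. Qed.

Lemma sqmod_normc z : sqmod z = Normc.normc z ^+ 2.
Proof. by case: z => a b; rewrite /= sqr_sqrtr // addr_ge0 ?sqr_ge0. Qed.

Lemma cconjE z : cconj z = (z^*)%C.
Proof. by case: z. Qed.

Lemma sqmod_cconj z : sqmod (cconj z) = sqmod z.
Proof. by case: z => a b; rewrite /sqmod /cconj /= sqrrN. Qed.

Lemma sqmodE z : sqmod z = complex.Re (z * cconj z).
Proof. by case: z => a b; rewrite /sqmod /=; ring. Qed.

Lemma sqmod_realM (r : R) z : sqmod ((r%:C)%C * z) = r ^+ 2 * sqmod z.
Proof. by case: z => a b; rewrite /sqmod /=; ring. Qed.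

Lemma ReM_le_sqmod x y : complex.Re (x * y) <= 2^-1 * sqmod x + 2^-1 * sqmod y.
Proof.
case: x => a b; case: y => c d; rewrite /sqmod /=.
have := sqr_ge0 (a - c); have := sqr_ge0 (b + d); nra.
Qed.

Lemma normr_ReM_le x y : `|complex.Re (x * y)| <= sqmod x + sqmod y.
Proof.
case: x => a b; case: y => c d; rewrite /sqmod /= ler_norml; apply/andP; split.
  by have := sqr_ge0 (a + c); have := sqr_ge0 (b - d); nra.
by have := sqr_ge0 (a - c); have := sqr_ge0 (b + d); nra.
Qed.

Lemma normr_ImM_le x y : `|complex.Im (x * y)| <= sqmod x + sqmod y.
Proof.
case: x => a b; case: y => c d; rewrite /sqmod /= ler_norml; apply/andP; split.
  by have := sqr_ge0 (a + d); have := sqr_ge0 (b + c); nra.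
by have := sqr_ge0 (a - d); have := sqr_ge0 (b - c); nra.
Qed.

Lemma cauchy_schwarz_real (T : Type) (r : seq T) (a b : T -> R) :
  (\sum_(k <- r) a k * b k) ^+ 2 <=
  (\sum_(k <- r) a k ^+ 2) * (\sum_(k <- r) b k ^+ 2).
Proof.
have lagrange : \sum_(k <- r) \sum_(l <- r) (a k * b l - a l * b k) ^+ 2 =
    2 * ((\sum_(k <- r) a k ^+ 2) * (\sum_(k <- r) b k ^+ 2)
         - (\sum_(k <- r) a k * b k) ^+ 2).
  transitivity (\sum_(k <- r) \sum_(l <- r) a k ^+ 2 * b l ^+ 2
      + \sum_(k <- r) \sum_(l <- r) a l ^+ 2 * b k ^+ 2
      - 2 * \sum_(k <- r) \sum_(l <- r) (a k * b k) * (a l * b l)).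
    rewrite mulr_sumr -big_split -sumrB /=; apply: eq_bigr => k _.
    rewrite mulr_sumr -big_split -sumrB /=; apply: eq_bigr => l _; ring.
  rewrite [X in _ + X - _]exchange_big /= -!big_distrlr /=; ring.
have : 0 <= \sum_(k <- r) \sum_(l <- r) (a k * b l - a l * b k) ^+ 2.
  by apply: sumr_ge0 => k _; apply: sumr_ge0 => l _; apply: sqr_ge0.
by rewrite lagrange pmulr_rge0 // subr_ge0.
Qed.

Lemma normc_sum_le (T : Type) (r : seq T) (F : T -> R[i]) :
  Normc.normc (\sum_(k <- r) F k) <= \sum_(k <- r) Normc.normc (F k).
Proof.
elim: r => [|a r IH]; first by rewrite !big_nil Normc.normc0.
by rewrite !big_cons (le_trans (le_normcD _ _)) // lerD2l.
Qed.

Lemma cauchy_schwarz_sqmod (T : Type) (r : seq T) (a b : T -> R[i]) :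
  sqmod (\sum_(k <- r) a k * b k) <=
  (\sum_(k <- r) sqmod (a k)) * (\sum_(k <- r) sqmod (b k)).
Proof.
have normc_ge0 z : 0 <= Normc.normc z by case: z => u v; apply: sqrtr_ge0.
have tri : Normc.normc (\sum_(k <- r) a k * b k) <=
    \sum_(k <- r) Normc.normc (a k) * Normc.normc (b k).
  apply: le_trans (normc_sum_le r _) _.
  by apply: ler_sum => k _; rewrite Normc.normcM.
rewrite sqmod_normc.
apply: (@le_trans _ _ ((\sum_(k <- r) Normc.normc (a k) * Normc.normc (b k)) ^+ 2)).
  by rewrite ler_sqr ?nnegrE ?tri ?sumr_ge0 // => k _; rewrite mulr_ge0.
rewrite (eq_bigr _ (fun k _ => sqmod_normc (a k))) (eq_bigr _ (fun k _ => sqmod_normc (b k))).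
exact: cauchy_schwarz_real.
Qed.

Lemma sqmod_sum_le (T : finType) (a : T -> R[i]) :
  sqmod (\sum_(k : T) a k) <= #|T|%:R * \sum_(k : T) sqmod (a k).
Proof.
have := @cauchy_schwarz_sqmod _ (index_enum T) (fun=> 1) a.
have sqmod1 : sqmod (1 : R[i]) = 1 by rewrite /sqmod /= expr1n expr0n addr0.
by under eq_bigr do rewrite mul1r; rewrite sqmod1 sumr_const.
Qed.

Lemma sum_sqmod_prod_le_gram (X W Y : Type) (xs : seq X) (ws : seq W)
    (ys : seq Y) (F : X -> W -> R[i]) (G : W -> Y -> R[i]) :
  \sum_(x <- xs) \sum_(y <- ys) sqmod (\sum_(w <- ws) F x w * G w y) <=
  2^-1 * \sum_(w <- ws) \sum_(w' <- ws) sqmod (\sum_(x <- xs) F x w * cconj (F x w'))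
  + 2^-1 * \sum_(w <- ws) \sum_(w' <- ws) sqmod (\sum_(y <- ys) G w y * cconj (G w' y)).
Proof.
set A := fun w w' => \sum_(x <- xs) F x w * cconj (F x w').
set B := fun w w' => \sum_(y <- ys) G w y * cconj (G w' y).
have expand : \sum_(x <- xs) \sum_(y <- ys) sqmod (\sum_(w <- ws) F x w * G w y) =
    complex.Re (\sum_(w <- ws) \sum_(w' <- ws) A w w' * B w w').
  transitivity (complex.Re (\sum_(x <- xs) \sum_(y <- ys) \sum_(w <- ws)
      \sum_(w' <- ws) (F x w * G w y) * cconj (F x w' * G w' y))).
    rewrite raddf_sum; apply: eq_bigr => x _; rewrite raddf_sum; apply: eq_bigr => y _.
    rewrite sqmodE cconjE rmorph_sum mulr_suml; congr complex.Re.
    by apply: eq_bigr => w _; rewrite mulr_sumr; apply: eq_bigr => w' _; rewrite cconjE.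
  congr complex.Re.
  under eq_bigr do rewrite exchange_big; under eq_bigr do under eq_bigr do rewrite exchange_big.
  rewrite exchange_big; apply: eq_bigr => w _.
  rewrite exchange_big; apply: eq_bigr => w' _.
  rewrite /A /B big_distrlr; apply: eq_bigr => x _; apply: eq_bigr => y _.
  by rewrite /= !cconjE rmorphM; ring.
rewrite expand raddf_sum !mulr_sumr -big_split /=; apply: ler_sum => w _.
rewrite raddf_sum !mulr_sumr -big_split /=; apply: ler_sum => w' _.
exact: ReM_le_sqmod.
Qed.

End ComplexFacts.

Record exhaustion (T : choiceType) (D : set T) (e : nat -> seq T) : Prop :=
  Exhaustion {
    exhaustion_uniq : forall N, uniq (e N);
    exhaustion_sub : forall N x, x \in e N -> D x;
    exhaustion_mono : forall N M, (N <= M)%N -> {subset e N <= e M};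
    exhaustion_cover : forall x, D x -> exists N, x \in e N }.

Section Exhaustions.
Context {T : choiceType} {D : set T} {e : nat -> seq T}.
Hypothesis eD : exhaustion D e.

Lemma exhaustion_seq (s : seq T) :
  (forall x, x \in s -> D x) -> exists N, {subset s <= e N}.
Proof.
elim: s => [|a s IH] sD; first by exists 0%N.
have [N1 aN1] := exhaustion_cover eD (sD a (mem_head _ _)).
have [N2 sN2] : exists N, {subset s <= e N}.
  by apply: IH => x xs; apply: sD; rewrite inE xs orbT.
exists (maxn N1 N2) => x; rewrite inE => /orP[/eqP ->|xs].
  exact: (exhaustion_mono eD (leq_maxl N1 N2) aN1).
exact: (exhaustion_mono eD (leq_maxr N1 N2) (sN2 _ xs)).
Qed.

End Exhaustions.

Lemma exhaustionX (X Y : choiceType) (A : set X) (B : set Y) eA eB :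
  exhaustion A eA -> exhaustion B eB ->
  exhaustion (A `*` B) (fun N => [seq (x, y) | x <- eA N, y <- eB N]).
Proof.
move=> hA hB; split.
- move=> N; apply: allpairs_uniq; [exact: exhaustion_uniq hA N|exact: exhaustion_uniq hB N|].
  by move=> [? ?] [? ?] _ _ [-> ->].
- by move=> N _ /allpairsP[[x y] [/= xN yN ->]]; split;
    [exact: (exhaustion_sub hA xN)|exact: (exhaustion_sub hB yN)].
- move=> N M NM _ /allpairsP[[x y] [/= xN yN ->]].
  by apply: allpairs_f; [exact: (exhaustion_mono hA NM xN)|exact: (exhaustion_mono hB NM yN)].
- move=> [x y] [/= Ax By].
  have [N xN] := exhaustion_cover hA Ax; have [M yM] := exhaustion_cover hB By.
  exists (maxn N M); apply: allpairs_f.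
    exact: (exhaustion_mono hA (leq_maxl N M) xN).
  exact: (exhaustion_mono hB (leq_maxr N M) yM).
Qed.

Lemma ler_sum_uniq_subset (R : numDomainType) (T : eqType) (s1 s2 : seq T) (r : T -> R) :
  uniq s1 -> uniq s2 -> {subset s1 <= s2} -> (forall x, x \in s2 -> 0 <= r x) ->
  \sum_(x <- s1) r x <= \sum_(x <- s2) r x.
Proof.
move=> s1_uniq s2_uniq s12 r_ge0; rewrite [leRHS](bigID (mem s1)) /=.
have -> : \sum_(x <- s2 | x \in s1) r x = \sum_(x <- s1) r x.
  rewrite -big_filter; apply/perm_big/uniq_perm; rewrite ?filter_uniq //.
  by move=> x; rewrite mem_filter andb_idr //; apply: s12.
by rewrite lerDl big_seq_cond sumr_ge0 // => x /andP[/r_ge0].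
Qed.

Section CountableExhaustion.
Variables (T : countType) (D : set T).

Definition count_exhaustion (N : nat) : seq T :=
  [seq x <- pmap (@pickle_inv T) (iota 0 N) | `[< D x >]].

Lemma mem_count_exhaustion N x :
  (x \in count_exhaustion N) = `[< D x >] && (pickle x < N)%N.
Proof.
rewrite mem_filter; congr andb; rewrite mem_pmap.
apply/mapP/idP => [[n nN xn]|xN]; last by exists (pickle x); rewrite ?mem_iota ?pickleK_inv.
by move: nN; rewrite mem_iota -[n](@pickle_invK T) -xn.
Qed.

Lemma exhaustion_count : exhaustion D count_exhaustion.
Proof.
split => [N|N x|N M NM x|x Dx].
- exact/filter_uniq/(pmap_uniq (@pickle_invK T))/iota_uniq.
- by rewrite mem_count_exhaustion => /andP[/asboolP].
- by rewrite !mem_count_exhaustion => /andP[-> /leq_trans]; apply.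
- by exists (pickle x).+1; rewrite mem_count_exhaustion ltnSn andbT; apply/asboolP.
Qed.

End CountableExhaustion.

Section EsumExhaustion.
Context {R : realType}.

Definition sq_summable (T : choiceType) (D : set T) (a : T -> R[i]) : Prop :=
  (\esum_(x in D) (sqmod (a x))%:E < +oo)%E.

Lemma sum_le_esum (T : choiceType) (D : set T) (s : seq T) (r : T -> R) :
  uniq s -> (forall x, x \in s -> D x) ->
  ((\sum_(x <- s) r x)%:E <= \esum_(x in D) (r x)%:E)%E.
Proof.
move=> s_uniq sD; rewrite -sumEFin fsbig_seq //; apply: esum_ge.
exists [set` s]; last by [].
by split; [exact: finite_seq|move=> x /sD].
Qed.

Lemma sum_le_fine_esum (T : choiceType) (D : set T) (s : seq T) (r : T -> R) :
  uniq s -> (forall x, x \in s -> D x) -> (\esum_(x in D) (r x)%:E < +oo)%E ->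
  \sum_(x <- s) r x <= fine (\esum_(x in D) (r x)%:E).
Proof.
move=> s_uniq sD r_fin; have := sum_le_esum r s_uniq sD.
by case: (\esum_(x in D) _) r_fin => [x _||] //=; rewrite ?lee_fin ?leeNy_eq.
Qed.

Lemma sum2_le_fine_esum (X Y : choiceType) (A : set X) (B : set Y)
    (xs : seq X) (ys : seq Y) (r : X -> Y -> R) :
  uniq xs -> uniq ys -> (forall x, x \in xs -> A x) -> (forall y, y \in ys -> B y) ->
  (\esum_(z in A `*` B) (r z.1 z.2)%:E < +oo)%E ->
  \sum_(x <- xs) \sum_(y <- ys) r x y <= fine (\esum_(z in A `*` B) (r z.1 z.2)%:E).
Proof.
move=> xs_uniq ys_uniq xsA ysB r_fin.
rewrite -(big_allpairs (F := fun z => r z.1 z.2)); apply: sum_le_fine_esum => //.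
  by apply: allpairs_uniq => // -[? ?] [? ?] _ _ [-> ->].
by move=> _ /allpairsP[[x y] [/= /xsA Ax /ysB By ->]].
Qed.

Lemma sq_summable_inj (T T' : choiceType) (A : set T) (B : set T') (f : T -> T')
    (a : T' -> R[i]) :
  set_inj A f -> f @` A `<=` B -> sq_summable B a -> sq_summable A (a \o f).
Proof.
move=> f_inj fAB; apply: le_lt_trans.
rewrite /= -(esum_image A f (fun y => (sqmod (a y))%:E) f_inj).
rewrite esum_mkcond [leRHS]esum_mkcond; apply: le_esum => y _.
case: ifPn => [/set_mem /fAB By|_]; first by rewrite ifT // inE.
by case: ifP; rewrite lee_fin ?sqmod_ge0.
Qed.

Lemma cvg_sum_seq (T : eqType) (r : seq T) (u : T -> nat -> R) (l : T -> R) :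
  (forall i, i \in r -> u i @ \oo --> l i) ->
  (fun n => \sum_(i <- r) u i n) @ \oo --> \sum_(i <- r) l i.
Proof.
move=> u_cvg; rewrite big_seq.
have -> : (fun n => \sum_(i <- r) u i n) = (fun n => \sum_(i <- r | i \in r) u i n).
  by apply: funext => n; rewrite big_seq.
by apply: cvg_big u_cvg; exact: add_continuous.
Qed.

Lemma eq_csum (T : choiceType) (D : set T) (h h' : T -> R[i]) :
  (forall x, D x -> h x = h' x) -> csum D h = csum D h'.
Proof.
move=> hh'; congr (_ +i* _)%C; congr (fine _ - fine _).
all: by apply: eq_esum => x /hh' ->.
Qed.

Lemma sq_summable_cconj (T : choiceType) (D : set T) (a : T -> R[i]) :
  sq_summable D a -> sq_summable D (fun x => cconj (a x)).
Proof. by rewrite /sq_summable => a_fin; under eq_esum do rewrite sqmod_cconj. Qed.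

Context {T : choiceType} {D : set T} {e : nat -> seq T}.
Hypothesis eD : exhaustion D e.

Lemma esum_le_exhaustion (r : T -> R) (M : R) :
  (forall x, D x -> 0 <= r x) -> (forall N, \sum_(x <- e N) r x <= M) ->
  (\esum_(x in D) (r x)%:E <= M%:E)%E.
Proof.
move=> r_ge0 eM; apply: ge_ereal_sup => _ [X [finX XD] <-].
rewrite fsbig_finite //= sumEFin lee_fin.
have [N XN] : exists N, {subset finmap.enum_fset (fset_set X) <= e N}.
  by apply: (exhaustion_seq eD) => x; rewrite in_fset_set // inE => /XD.
apply: le_trans (eM N); apply: ler_sum_uniq_subset => //.
  exact: exhaustion_uniq eD N.
by move=> x /(exhaustion_sub eD) /r_ge0.
Qed.

Lemma ler_sum_exhaustion (r : T -> R) N M : (N <= M)%N ->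
  (forall x, D x -> 0 <= r x) -> \sum_(x <- e N) r x <= \sum_(x <- e M) r x.
Proof.
move=> NM r_ge0; apply: ler_sum_uniq_subset; [exact: exhaustion_uniq eD N|
  exact: exhaustion_uniq eD M|exact: (exhaustion_mono eD NM)|].
by move=> x /(exhaustion_sub eD) /r_ge0.
Qed.

Lemma exhaustion_cvg_esum (r : T -> R) :
  (forall x, D x -> 0 <= r x) -> (\esum_(x in D) (r x)%:E < +oo)%E ->
  (fun N => \sum_(x <- e N) r x) @ \oo --> fine (\esum_(x in D) (r x)%:E).
Proof.
move=> r_ge0 r_fin; set u := fun N => \sum_(x <- e N) r x.
have S_fin : \esum_(x in D) (r x)%:E \is a fin_num.
  by rewrite ge0_fin_numE // esum_ge0 // => x /r_ge0; rewrite lee_fin.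
have u_ub N : u N <= fine (\esum_(x in D) (r x)%:E).
  apply: sum_le_fine_esum => //; first exact: exhaustion_uniq eD N.
  by move=> x /(exhaustion_sub eD).
have u_nd : {homo u : n m / (n <= m)%N >-> n <= m}.
  by move=> n m nm; apply: ler_sum_exhaustion.
have u_bd : has_ubound (range u) by exists (fine (\esum_(x in D) (r x)%:E)) => _ [N _ <-].
suff -> : fine (\esum_(x in D) (r x)%:E) = sup (range u) by exact: nondecreasing_cvgn.
apply/eqP; rewrite eq_le; apply/andP; split; last first.
  by apply: ge_sup; [exists (u 0%N), 0%N|move=> _ [N _ <-]].
rewrite -lee_fin fineK //; apply: esum_le_exhaustion => // N.
by apply: sup_upper_bound; [split=> //; exists (u 0%N), 0%N|exists N].
Qed.

Lemma exhaustion_cvg_rsum (g : T -> R) :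
  (\esum_(x in D) (`|g x|)%:E < +oo)%E ->
  (fun N => \sum_(x <- e N) g x) @ \oo --> rsum D g.
Proof.
move=> g_fin.
have max0_ge0 (x : R) : 0 <= Num.max x 0 by rewrite le_max lexx orbT.
have max0_fin (h : T -> R) : (forall x, `|h x| = `|g x|) ->
    (\esum_(x in D) (Num.max (h x) 0)%:E < +oo)%E.
  move=> hg; apply: le_lt_trans g_fin; apply: le_esum => x _.
  by rewrite lee_fin -hg ge_max normr_ge0 ler_norm.
have -> : (fun N => \sum_(x <- e N) g x) = (fun N =>
    \sum_(x <- e N) Num.max (g x) 0 - \sum_(x <- e N) Num.max (- g x) 0).
  apply: funext => N; rewrite -sumrB; apply: eq_bigr => x _.
  have [gx0|gx0] := lerP 0 (g x); first by rewrite max_r ?subr0 // oppr_le0.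
  by rewrite max_l ?sub0r ?opprK // oppr_ge0 ltW.
apply: cvgB; apply: exhaustion_cvg_esum => //; apply: max0_fin => x //.
exact: normrN.
Qed.

Lemma exhaustion_cvg_sqmod_csumM (a b : T -> R[i]) :
  sq_summable D a -> sq_summable D b ->
  (fun N => sqmod (\sum_(x <- e N) a x * b x)) @ \oo -->
    sqmod (csum D (fun x => a x * b x)).
Proof.
move=> a_fin b_fin.
have part_fin (c : R[i] -> R) : (forall x y, `|c (x * y)| <= sqmod x + sqmod y) ->
    (\esum_(x in D) (`|c (a x * b x)|)%:E < +oo)%E.
  move=> c_le; apply: (@le_lt_trans _ _
    (\esum_(x in D) (sqmod (a x))%:E + \esum_(x in D) (sqmod (b x))%:E)%E).
    rewrite -esumD => [|x _|x _]; rewrite ?lee_fin ?sqmod_ge0 //.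
    by apply: le_esum => x _; rewrite lee_fin; exact: c_le.
  exact: lte_add_pinfty.
have cvg_Re : (fun N => complex.Re (\sum_(x <- e N) a x * b x)) @ \oo -->
    complex.Re (csum D (fun x => a x * b x)).
  under eq_fun do rewrite raddf_sum.
  exact: exhaustion_cvg_rsum (part_fin _ (@normr_ReM_le _)).
have cvg_Im : (fun N => complex.Im (\sum_(x <- e N) a x * b x)) @ \oo -->
    complex.Im (csum D (fun x => a x * b x)).
  under eq_fun do rewrite raddf_sum.
  exact: exhaustion_cvg_rsum (part_fin _ (@normr_ImM_le _)).
by rewrite /sqmod; apply: cvgD; rewrite expr2; apply: cvgM.
Qed.

End EsumExhaustion.

Section MatrixProduct.
Context {R : realType} {X W Y : countType}.

Definition mxprod (DW : set W) (F : X -> W -> R[i]) (G : W -> Y -> R[i]) x y :=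
  csum DW (fun w => F x w * G w y).

Definition gram_left (DX : set X) (F : X -> W -> R[i]) w w' :=
  csum DX (fun x => F x w * cconj (F x w')).

Definition gram_right (DY : set Y) (G : W -> Y -> R[i]) w w' :=
  csum DY (fun y => G w y * cconj (G w' y)).

Variables (DX : set X) (DW : set W) (DY : set Y).
Variables (F : X -> W -> R[i]) (G : W -> Y -> R[i]).
Hypothesis F_fin : sq_summable (DX `*` DW) (fun z => F z.1 z.2).
Hypothesis G_fin : sq_summable (DW `*` DY) (fun z => G z.1 z.2).

Local Notation eX := (count_exhaustion DX).
Local Notation eW := (count_exhaustion DW).
Local Notation eY := (count_exhaustion DY).
Local Notation EF := (fine (\esum_(z in DX `*` DW) (sqmod (F z.1 z.2))%:E)).
Local Notation EG := (fine (\esum_(z in DW `*` DY) (sqmod (G z.1 z.2))%:E)).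

Let F_row x : DX x -> sq_summable DW (F x).
Proof.
move=> DXx; apply: (sq_summable_inj (f := pair x)) F_fin.
- by move=> w w' _ _ [].
- by move=> _ [w DWw <-].
Qed.

Let F_col w : DW w -> sq_summable DX (F^~ w).
Proof.
move=> DWw; apply: (sq_summable_inj (f := pair^~ w)) F_fin.
- by move=> x x' _ _ [].
- by move=> _ [x DXx <-].
Qed.

Let G_row w : DW w -> sq_summable DY (G w).
Proof.
move=> DWw; apply: (sq_summable_inj (f := pair w)) G_fin.
- by move=> y y' _ _ [].
- by move=> _ [y DYy <-].
Qed.

Let G_col y : DY y -> sq_summable DW (G^~ y).
Proof.
move=> DYy; apply: (sq_summable_inj (f := pair^~ y)) G_fin.
- by move=> w w' _ _ [].
- by move=> _ [w DWw <-].
Qed.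

Lemma esum_mxprod_le (b : R) :
  (forall N M, \sum_(x <- eX N) \sum_(y <- eY N)
     sqmod (\sum_(w <- eW M) F x w * G w y) <= b) ->
  (\esum_(z in DX `*` DY) (sqmod (mxprod DW F G z.1 z.2))%:E <= b%:E)%E.
Proof.
move=> trunc_le.
apply: (esum_le_exhaustion (exhaustionX (exhaustion_count DX) (exhaustion_count DY))).
  by move=> z _; exact: sqmod_ge0.
move=> N; rewrite big_allpairs /=.
have trunc_cvg : (fun M => \sum_(x <- eX N) \sum_(y <- eY N)
    sqmod (\sum_(w <- eW M) F x w * G w y)) @ \oo -->
    \sum_(x <- eX N) \sum_(y <- eY N) sqmod (mxprod DW F G x y).
  apply: cvg_sum_seq => x xN; apply: cvg_sum_seq => y yN.
  apply: (exhaustion_cvg_sqmod_csumM (exhaustion_count DW) (a := F x) (b := G^~ y)).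
    exact/F_row/(exhaustion_sub (exhaustion_count DX) xN).
  exact/G_col/(exhaustion_sub (exhaustion_count DY) yN).
by apply: (ler_cvg_to trunc_cvg (cvg_cst b)); near=> M; apply: trunc_le.
Unshelve. all: by end_near.
Qed.

Lemma esum_mxprod_le_mul :
  (\esum_(z in DX `*` DY) (sqmod (mxprod DW F G z.1 z.2))%:E <= (EF * EG)%:E)%E.
Proof.
apply: esum_mxprod_le => N M.
apply: (@le_trans _ _ (\sum_(x <- eX N) \sum_(y <- eY N)
    (\sum_(w <- eW M) sqmod (F x w)) * \sum_(w <- eW M) sqmod (G w y))).
  by apply: ler_sum => x _; apply: ler_sum => y _; exact: cauchy_schwarz_sqmod.
rewrite -big_distrlr /= [X in _ * X]exchange_big /=.
have eX_uniq := exhaustion_uniq (exhaustion_count DX) N.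
have eW_uniq := exhaustion_uniq (exhaustion_count DW) M.
have eY_uniq := exhaustion_uniq (exhaustion_count DY) N.
apply: ler_pM.
- by rewrite sumr_ge0 // => x _; rewrite sumr_ge0 // => w _; exact: sqmod_ge0.
- by rewrite sumr_ge0 // => w _; rewrite sumr_ge0 // => y _; exact: sqmod_ge0.
- by apply: sum2_le_fine_esum => // ? /(exhaustion_sub (exhaustion_count _)).
- by apply: sum2_le_fine_esum => // ? /(exhaustion_sub (exhaustion_count _)).
Qed.

Lemma esum_mxprod_le_gram :
  sq_summable (DW `*` DW) (fun z => gram_left DX F z.1 z.2) ->
  sq_summable (DW `*` DW) (fun z => gram_right DY G z.1 z.2) ->
  (\esum_(z in DX `*` DY) (sqmod (mxprod DW F G z.1 z.2))%:E <=
    (2^-1 * fine (\esum_(z in DW `*` DW) (sqmod (gram_left DX F z.1 z.2))%:E)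
   + 2^-1 * fine (\esum_(z in DW `*` DW) (sqmod (gram_right DY G z.1 z.2))%:E))%:E)%E.
Proof.
move=> A_fin B_fin; apply: esum_mxprod_le => N M.
have eW_sub := exhaustion_sub (exhaustion_count DW) (N := M).
have eW_uniq := exhaustion_uniq (exhaustion_count DW) M.
apply: (@le_trans _ _ (2^-1 * \sum_(w <- eW M) \sum_(w' <- eW M) sqmod (gram_left DX F w w')
    + 2^-1 * \sum_(w <- eW M) \sum_(w' <- eW M) sqmod (gram_right DY G w w'))); last first.
  by apply: lerD; rewrite ler_pM2l ?invr_gt0 ?ltr0n //; apply: sum2_le_fine_esum.
set lhs := \sum_(x <- eX N) _.
have gram_cvg : (fun K =>
      2^-1 * \sum_(w <- eW M) \sum_(w' <- eW M) sqmod (\sum_(x <- eX K) F x w * cconj (F x w'))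
    + 2^-1 * \sum_(w <- eW M) \sum_(w' <- eW M) sqmod (\sum_(y <- eY K) G w y * cconj (G w' y)))
    @ \oo --> 2^-1 * \sum_(w <- eW M) \sum_(w' <- eW M) sqmod (gram_left DX F w w')
    + 2^-1 * \sum_(w <- eW M) \sum_(w' <- eW M) sqmod (gram_right DY G w w').
  apply: cvgD; apply: cvgM; try exact: cvg_cst;
    apply: cvg_sum_seq => w /eW_sub DWw; apply: cvg_sum_seq => w' /eW_sub DWw'.
    apply: (exhaustion_cvg_sqmod_csumM (exhaustion_count DX) (a := F^~ w));
      [exact: F_col|exact/sq_summable_cconj/F_col].
  apply: (exhaustion_cvg_sqmod_csumM (exhaustion_count DY) (a := G w));
    [exact: G_row|exact/sq_summable_cconj/G_row].
(* Enlarging the ranges of x and y from N to K only increases lhs, and the truncated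
   Gram sums converge as K grows. *)
apply: (ler_cvg_to (cvg_cst lhs) gram_cvg); near=> K.
apply: le_trans (sum_sqmod_prod_le_gram _ _ _ _ _); rewrite /lhs.
have NK : (N <= K)%N by near: K; exists N.
apply: (@le_trans _ _ (\sum_(x <- eX N) \sum_(y <- eY K) sqmod (\sum_(w <- eW M) F x w * G w y))).
  apply: ler_sum => x _; apply: (ler_sum_exhaustion (exhaustion_count DY) NK) => y _.
  exact: sqmod_ge0.
apply: (ler_sum_exhaustion (exhaustion_count DX) NK) => x _.
by apply: sumr_ge0 => y _; exact: sqmod_ge0.
Unshelve. all: by end_near.
Qed.

End MatrixProduct.

Lemma set_bij_inverse (T U : Type) (A : set T) (B : set U) (f : T -> U) (g : U -> T) :
  (forall x, A x -> B (f x)) -> (forall y, B y -> A (g y)) ->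
  (forall x, A x -> g (f x) = x) -> (forall y, B y -> f (g y) = y) -> set_bij A B f.
Proof.
move=> fAB gBA fK gK; split => [x /fAB //|x y /set_mem Ax /set_mem Ay fxy|y By].
  by rewrite -(fK x Ax) -(fK y Ay) fxy.
by exists (g y); [exact: gBA|exact: gK].
Qed.

Lemma setX_swap_bij (T U : Type) (A : set T) (B : set U) :
  set_bij (A `*` B) (B `*` A) (fun z => (z.2, z.1)).
Proof.
by apply: (@set_bij_inverse _ _ _ _ _ (fun z => (z.2, z.1))) => [[x y] []|[x y] []|[]|[]].
Qed.

Section Arity.
Variable I : countType.
Local Notation idx := (seq I * seq I)%type.

Definition catp (x y : idx) : idx := (x.1 ++ y.1, x.2 ++ y.2).

Lemma arity_swap_bij p q : set_bij (@arity I p q) (arity q p) (fun x => (x.2, x.1)).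
Proof.
by apply: (@set_bij_inverse _ _ _ _ _ (fun x => (x.2, x.1))) => [[t s] []|[t s] []|[]|[]].
Qed.

Lemma arity_id_bij p q : set_bij (@arity I p q) (arity p q) id.
Proof. exact: (@set_bij_inverse _ _ _ _ _ id). Qed.

Lemma catp_bij (A B : set idx) (phi psi : idx -> idx) (a b c d : nat) :
  set_bij A (arity a b) phi -> set_bij B (arity c d) psi ->
  set_bij (A `*` B) (arity (a + c) (b + d)) (fun z => catp (phi z.1) (psi z.2)).
Proof.
move=> phi_bij psi_bij; split.
- move=> z [/(set_bij_homo phi_bij) [/= s1 s2] /(set_bij_homo psi_bij) [/= s3 s4]].
  by rewrite /arity /= !size_cat s1 s2 s3 s4.
- move=> [x y] [x' y'] /set_mem [/= Ax By] /set_mem [/= Ax' By'] [].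
  have [[/= sx1 sx2] [/= sy1 sy2]] := (set_bij_homo phi_bij Ax, set_bij_homo psi_bij By).
  have [[/= sx1' sx2'] [/= sy1' sy2']] := (set_bij_homo phi_bij Ax', set_bij_homo psi_bij By').
  move=> /eqP; rewrite eqseq_cat ?sx1 ?sx1' // => /andP[/eqP e1 /eqP e3].
  move=> /eqP; rewrite eqseq_cat ?sx2 ?sx2' // => /andP[/eqP e2 /eqP e4].
  congr pair; [apply: (set_bij_inj phi_bij) | apply: (set_bij_inj psi_bij)]; rewrite ?inE //.
    by rewrite [phi x]surjective_pairing e1 e2 -surjective_pairing.
  by rewrite [psi y]surjective_pairing e3 e4 -surjective_pairing.
- move=> [t s] [/= st ss].
  have [x Ax phix] : (phi @` A) (take a t, take b s).
    by apply: (set_bij_surj phi_bij); split; rewrite /= size_takel ?st ?ss ?leq_addr.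
  have [y By psiy] : (psi @` B) (drop a t, drop b s).
    by apply: (set_bij_surj psi_bij); split; rewrite /= size_drop ?st ?ss addKn.
  by exists (x, y) => //; rewrite /catp /= phix psiy /= !cat_take_drop.
Qed.

End Arity.

Section Factors.
Context {R : realType} {I : countType}.
Local Notation idx := (seq I * seq I)%type.
Implicit Types (f g : tensor R I).

(* In w = (u, v), u holds the i arguments contracted between the first group of f
   and the last group of g, and v the j arguments contracted between the last group
   of f and the first group of g. *)
Definition left_factor f (x w : idx) : R[i] := f (x.1 ++ w.1) (x.2 ++ w.2).

Definition right_factor g (w y : idx) : R[i] := g (y.1 ++ w.2) (y.2 ++ w.1).

Lemma in_sym_space_catC p q f (t t' s s' : seq I) : in_sym_space p q f ->
  size (t ++ t') = p -> size (s ++ s') = q -> f (t ++ t') (s ++ s') = f (t' ++ t) (s' ++ s).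
Proof. by move=> [_ f_sym] st ss; apply: f_sym => //; rewrite perm_catC. Qed.

Lemma hnorm2_left_factor p q i j f : (i <= p)%N -> (j <= q)%N ->
  hnorm2 p q f =
  \esum_(z in arity (p - i) (q - j) `*` arity i j) (sqmod (left_factor f z.1 z.2))%:E.
Proof.
move=> ip jq; rewrite /hnorm2 -{1}(subnK ip) -{1}(subnK jq).
by rewrite (reindex_esum _ _ _ _ (catp_bij (arity_id_bij I _ _) (arity_id_bij I i j))).
Qed.

Lemma hnorm2_right_factor p q i j g : (i <= q)%N -> (j <= p)%N ->
  hnorm2 p q g =
  \esum_(z in arity i j `*` arity (p - j) (q - i)) (sqmod (right_factor g z.1 z.2))%:E.
Proof.
move=> iq jp; rewrite /hnorm2 -{1}(subnK jp) -{1}(subnK iq).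
by rewrite (reindex_esum _ _ _ _ (set_bij_comp (setX_swap_bij _ _)
  (catp_bij (arity_id_bij I _ _) (arity_swap_bij I i j)))).
Qed.

Lemma hnorm2_contr p1 q1 p2 q2 i j f1 f2 :
  (i <= minn p1 q2)%N -> (j <= minn q1 p2)%N ->
  hnorm2 (p1 + p2 - i - j) (q1 + q2 - i - j) (contr p1 q1 i j f1 f2) =
  \esum_(z in arity (p1 - i) (q1 - j) `*` arity (p2 - j) (q2 - i))
    (sqmod (mxprod (arity i j) (left_factor f1) (right_factor f2) z.1 z.2))%:E.
Proof.
rewrite !leq_min => /andP[ip1 iq2] /andP[jq1 jp2].
have -> : (p1 + p2 - i - j = p1 - i + (p2 - j))%N by lia.
have -> : (q1 + q2 - i - j = q1 - j + (q2 - i))%N by lia.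
rewrite /hnorm2 (reindex_esum _ _ _ _ (catp_bij (arity_id_bij I _ _) (arity_id_bij I _ _))).
apply: eq_esum => -[[t s] [t' s']] [[/= st ss] _].
by rewrite /contr /catp /= -st -ss !take_size_cat ?drop_size_cat.
Qed.

Lemma hnorm2_contr_gram_left p q i j f : in_sym_space p q f ->
  (i <= p)%N -> (j <= q)%N ->
  hnorm2 (i + j) (i + j) (contr p q (p - i) (q - j) f (rconj f)) =
  \esum_(z in arity i j `*` arity i j)
    (sqmod (gram_left (arity (p - i) (q - j)) (left_factor f) z.1 z.2))%:E.
Proof.
move=> f_sym ip jq.
have bij := catp_bij (arity_id_bij I i j) (arity_swap_bij I i j).
rewrite [(j + i)%N]addnC in bij.
rewrite /hnorm2 (reindex_esum _ _ _ _ bij).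
apply: eq_esum => -[[u v] [u' v']] [[/= su sv] [/= su' sv']].
rewrite /contr /catp /= !subKn // (take_size_cat _ su) (take_size_cat _ sv).
rewrite (drop_size_cat _ su) (drop_size_cat _ sv) /gram_left.
congr ((sqmod _)%:E); apply: eq_csum => -[x y] [/= sx sy].
have f_catC a b : size a = i -> size b = j -> f (a ++ x) (b ++ y) = f (x ++ a) (y ++ b).
  by move=> sa sb; apply: in_sym_space_catC f_sym _ _; rewrite size_cat ?sa ?sb ?sx ?sy subnKC.
by rewrite /left_factor /rconj /= (f_catC u v) ?(f_catC u' v').
Qed.

Lemma hnorm2_contr_gram_right p q i j g : in_sym_space p q g ->
  (i <= q)%N -> (j <= p)%N ->
  hnorm2 (i + j) (i + j) (contr p q (p - j) (q - i) g (rconj g)) =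
  \esum_(z in arity i j `*` arity i j)
    (sqmod (gram_right (arity (p - j) (q - i)) (right_factor g) z.1 z.2))%:E.
Proof.
move=> g_sym iq jp.
have bij := catp_bij (arity_swap_bij I i j) (arity_id_bij I i j).
rewrite [(j + i)%N]addnC in bij.
rewrite /hnorm2 (reindex_esum _ _ _ _ bij).
apply: eq_esum => -[[u v] [u' v']] [[/= su sv] [/= su' sv']].
rewrite /contr /catp /= !subKn // (take_size_cat _ sv) (take_size_cat _ su).
rewrite (drop_size_cat _ sv) (drop_size_cat _ su) /gram_right.
congr ((sqmod _)%:E); apply: eq_csum => -[x y] [/= sx sy].
have g_catC a b : size a = j -> size b = i -> g (a ++ x) (b ++ y) = g (x ++ a) (y ++ b).
  by move=> sa sb; apply: in_sym_space_catC g_sym _ _; rewrite size_cat ?sa ?sb ?sx ?sy subnKC.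
by rewrite /right_factor /rconj /= (g_catC v u) ?(g_catC v' u').
Qed.

End Factors.

Section Norms.
Context {R : realType} {I : countType}.
Implicit Types (f g : tensor R I).

Lemma hnorm2_ge0 p q f : (0 <= hnorm2 p q f)%E.
Proof. by apply: esum_ge0 => x _; rewrite lee_fin sqmod_ge0. Qed.

Lemma hnorm2_fin_num p q f : (hnorm2 p q f < +oo)%E -> hnorm2 p q f \is a fin_num.
Proof. by rewrite ge0_fin_numE ?hnorm2_ge0. Qed.

Lemma hnorm_sqr p q f : (hnorm2 p q f < +oo)%E -> hnorm p q f ^+ 2 = fine (hnorm2 p q f).
Proof. by move=> f_fin; rewrite sqr_sqrtr // fine_ge0 // hnorm2_ge0. Qed.

Lemma hnorm2E p q f : (hnorm2 p q f < +oo)%E -> hnorm2 p q f = (hnorm p q f ^+ 2)%:E.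
Proof. by move=> f_fin; rewrite hnorm_sqr // fineK // hnorm2_fin_num. Qed.

Lemma hnorm_le p q f (x : R) :
  0 <= x -> (hnorm2 p q f <= (x ^+ 2)%:E)%E -> hnorm p q f <= x.
Proof.
move=> x_ge0 fx; have f_fin : (hnorm2 p q f < +oo)%E by rewrite (le_lt_trans fx) ?ltry.
by rewrite -ler_sqr ?nnegrE ?sqrtr_ge0 // -lee_fin -hnorm2E.
Qed.

Lemma hnorm2_rconj p q f : hnorm2 q p (rconj f) = hnorm2 p q f.
Proof.
rewrite [RHS]/hnorm2 (reindex_esum _ _ _ _ (arity_swap_bij I q p)).
by apply: eq_esum => -[t s] _; rewrite /rconj /= sqmod_cconj.
Qed.

Lemma hnorm2_contr_le p1 q1 p2 q2 i j f1 f2 :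
  (hnorm2 p1 q1 f1 < +oo)%E -> (hnorm2 p2 q2 f2 < +oo)%E ->
  (i <= minn p1 q2)%N -> (j <= minn q1 p2)%N ->
  (hnorm2 (p1 + p2 - i - j) (q1 + q2 - i - j) (contr p1 q1 i j f1 f2) <=
    ((hnorm p1 q1 f1 * hnorm p2 q2 f2) ^+ 2)%:E)%E.
Proof.
move=> f1_fin f2_fin hi hj; rewrite hnorm2_contr // exprMn !hnorm_sqr //.
move: hi hj; rewrite !leq_min => /andP[ip1 iq2] /andP[jq1 jp2].
rewrite (hnorm2_left_factor _ ip1 jq1) in f1_fin *.
rewrite (hnorm2_right_factor _ iq2 jp2) in f2_fin *.
exact: esum_mxprod_le_mul.
Qed.

Lemma hnorm2_contr_rconj_fin p q i j f : (hnorm2 p q f < +oo)%E ->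
  (i <= p)%N -> (j <= q)%N ->
  (hnorm2 (i + j) (i + j) (contr p q (p - i) (q - j) f (rconj f)) < +oo)%E.
Proof.
move=> f_fin ip jq; apply: le_lt_trans (ltry ((hnorm p q f * hnorm q p (rconj f)) ^+ 2)).
have := @hnorm2_contr_le p q q p (p - i) (q - j) f (rconj f).
have -> : (p + q - (p - i) - (q - j) = i + j)%N by lia.
have -> : (q + p - (p - i) - (q - j) = i + j)%N by lia.
by apply; rewrite ?hnorm2_rconj ?minnn ?leq_subr.
Qed.

Lemma hnorm2_contr_le_gram p1 q1 p2 q2 i j f1 f2 :
  in_sym_space p1 q1 f1 -> in_sym_space p2 q2 f2 ->
  (i <= minn p1 q2)%N -> (j <= minn q1 p2)%N ->
  (hnorm2 (p1 + p2 - i - j) (q1 + q2 - i - j) (contr p1 q1 i j f1 f2) <=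
    (2^-1 * hnorm (i + j) (i + j) (contr p1 q1 (p1 - i) (q1 - j) f1 (rconj f1)) ^+ 2
   + 2^-1 * hnorm (i + j) (i + j) (contr p2 q2 (p2 - j) (q2 - i) f2 (rconj f2)) ^+ 2)%:E)%E.
Proof.
move=> f1_sym f2_sym hi hj; rewrite hnorm2_contr //.
move: hi hj; rewrite !leq_min => /andP[ip1 iq2] /andP[jq1 jp2].
have A_fin := hnorm2_contr_rconj_fin f1_sym.1 ip1 jq1.
have B_fin := hnorm2_contr_rconj_fin f2_sym.1 jp2 iq2; rewrite addnC in B_fin.
rewrite !hnorm_sqr //.
rewrite (hnorm2_contr_gram_left f1_sym ip1 jq1) in A_fin *.
rewrite (hnorm2_contr_gram_right f2_sym iq2 jp2) in B_fin *.
have F_fin := f1_sym.1; rewrite (hnorm2_left_factor _ ip1 jq1) in F_fin.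
have G_fin := f2_sym.1; rewrite (hnorm2_right_factor _ iq2 jp2) in G_fin.
exact: esum_mxprod_le_gram.
Qed.

End Norms.

Section Symmetrization.
Context {R : realType} {I : countType}.

Lemma size_pseq n (sigma : 'S_n) (t : seq I) : size t = n -> size (pseq sigma t) = n.
Proof. by case: t => [|x t] st //=; rewrite size_map size_enum_ord. Qed.

Lemma pseq_inj n (sigma : 'S_n) (t t' : seq I) :
  size t = n -> size t' = n -> pseq sigma t = pseq sigma t' -> t = t'.
Proof.
case: t => [|x t] st; case: t' => [|x' t'] st' //=; first by move=> _; move: st; rewrite -st'.
  by move=> _; move: st'; rewrite -st.
move=> /eq_in_map e; apply: (@eq_from_nth _ x); first by rewrite st st'.
move=> k; rewrite st => kn.
have := e (sigma^-1 (Ordinal kn))%g; rewrite mem_enum permKV /= => -> //.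
by apply: set_nth_default; rewrite st'.
Qed.

Lemma hnorm2_symz_le n m (C : tensor R I) : (hnorm2 n m C < +oo)%E ->
  (hnorm2 n m (symz n m C) <= hnorm2 n m C)%E.
Proof.
move=> C_fin; rewrite -(fineK (hnorm2_fin_num C_fin)); apply: (esum_le_exhaustion (exhaustion_count _)) => [z _|N].
  exact: sqmod_ge0.
have symz_coef : ((n`!)%:R * (m`!)%:R : R[i])^-1 = ((((n`! * m`!)%:R : R)^-1)%:C)%C.
  by rewrite -natrM -(rmorph_nat (real_complex R)) fmorphV.
set k : R := (n`! * m`!)%:R.
have k_gt0 : 0 < k by rewrite ltr0n muln_gt0 !fact_gt0.
have jensen z : sqmod (symz n m C z.1 z.2) <=
    k^-1 * \sum_(st : 'S_n * 'S_m) sqmod (C (pseq st.1 z.1) (pseq st.2 z.2)).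
  rewrite /symz symz_coef sqmod_realM pair_big /=.
  apply: le_trans (ler_wpM2l (sqr_ge0 _) (sqmod_sum_le _)) _.
  by rewrite card_prod !card_Sn -/k expr2 -mulrA [k^-1 * (k * _)]mulrA mulVf ?mul1r ?gt_eqF.
have perm_le (st : 'S_n * 'S_m) : \sum_(z <- count_exhaustion (arity n m) N)
    sqmod (C (pseq st.1 z.1) (pseq st.2 z.2)) <= fine (hnorm2 n m C).
  rewrite -(big_map (fun z => (pseq st.1 z.1, pseq st.2 z.2)) xpredT (fun z => sqmod (C z.1 z.2))).
  have eN_sub := exhaustion_sub (exhaustion_count (arity n m)) (N := N).
  apply: sum_le_fine_esum => //.
    rewrite map_inj_in_uniq; first exact: exhaustion_uniq (exhaustion_count _) N.
    move=> [t s] [t' s'] /eN_sub [/= st1 ss] /eN_sub [/= st1' ss'] [].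
    by move=> /(pseq_inj st1 st1') -> /(pseq_inj ss ss') ->.
  by move=> _ /mapP[[t s] /eN_sub [/= tn sm] ->]; split; apply: size_pseq.
apply: le_trans (ler_sum _ (fun z _ => jensen z)) _.
rewrite -mulr_sumr exchange_big /=.
apply: (@le_trans _ _ (k^-1 * \sum_(st : 'S_n * 'S_m) fine (hnorm2 n m C))).
  apply: ler_wpM2l; first by rewrite invr_ge0 ltW.
  by apply: ler_sum => st _; exact: perm_le.
by rewrite sumr_const card_prod !card_Sn -mulr_natl -/k mulrA mulVf ?mul1r ?gt_eqF.
Qed.

End Symmetrization.

Theorem lemma3p7 (R : realType) (I : countType) (p1 q1 p2 q2 i j : nat)
    (f1 f2 : tensor R I) :
  in_sym_space p1 q1 f1 -> in_sym_space p2 q2 f2 ->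
  (i <= minn p1 q2)%N -> (j <= minn q1 p2)%N ->
  let n := (p1 + p2 - i - j)%N in
  let m := (q1 + q2 - i - j)%N in
  let C := contr p1 q1 i j f1 f2 in
  let h1 := rconj f1 in
  let h2 := rconj f2 in
  [/\ (hnorm2 n m (symz n m C) < +oo)%E,
      (hnorm2 n m C < +oo)%E,
      hnorm n m (symz n m C) <= hnorm n m C,
      hnorm n m C <= hnorm p1 q1 f1 * hnorm p2 q2 f2 &
      hnorm n m C ^+ 2 <=
        2^-1 * hnorm (i + j) (i + j) (contr p1 q1 (p1 - i) (q1 - j) f1 h1) ^+ 2
      + 2^-1 * hnorm (i + j) (i + j) (contr p2 q2 (p2 - j) (q2 - i) f2 h2) ^+ 2].
Proof.
move=> f1_sym f2_sym hi hj n m C h1 h2.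
have C_le := hnorm2_contr_le f1_sym.1 f2_sym.1 hi hj.
have C_fin : (hnorm2 n m C < +oo)%E by apply: le_lt_trans C_le (ltry _).
have S_le := hnorm2_symz_le C_fin.
split => //.
- exact: le_lt_trans S_le C_fin.
- by apply: hnorm_le; rewrite ?sqrtr_ge0 // -hnorm2E.
- by apply: hnorm_le; rewrite ?mulr_ge0 ?sqrtr_ge0.
- by rewrite -lee_fin -hnorm2E //; exact: hnorm2_contr_le_gram.
Qed.
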